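(* Let $(B_1;R_1),(B_2;R_2)\in\mathcal C$, let $A_0=B_1\cap B_2$, and suppose $R_1|A_0=R_2|A_0$ and $A_0\le(B_i;R_i)$ for $i=1,2$. Let $C=B_1\cup B_2$ with $R=R_1\cup R_2$, and let $d_C$ be the dimension function of $PG(C;R)$. For $X\subseteq C$ let $\eta(X)=d_1(X\cap B_1)+d_2(X\cap B_2)-d_0(X\cap A_0)$, where $d_i$ is the dimension function of $PG(B_i;R_i)$ and $d_0$ that of $PG(A_0;R_1|A_0)$, and let $\zeta(X)=\min\{\eta(Y):X\subseteq Y\subseteq C\}$. Then $d_C(X)=\zeta(X)$ for all $X\subseteq C$. Moreover, if $C'$ is any pregeometry on the set $C$ whose restrictions to $B_1$ and to $B_2$ are $PG(B_1;R_1)$ and $PG(B_2;R_2)$ respectively, then its dimension function satisfies $d_{C'}(X)\le\zeta(X)$ for all $X\subseteq C$.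
   Context: A set system is a pair $(A;R)$ where $R$ is a set of finite non-empty subsets of $A$; for $X\subseteq A$, $R[X]=\{r\in R:r\subseteq X\}$ and $\delta(X)=|X|-|R[X]|$; for $B\subseteq A$, $R|B=R[B]$. $\mathcal C$ is the class of finite set systems with $\delta(X)\ge0$ for all $X\subseteq A$. $X\le(A;R)$ means $\delta(X)\le\delta(X')$ for all $X\subseteq X'\subseteq A$. For a set system $(A;R)$ with $\delta\ge0$, $d(X)=\min\{\delta(Y):X\subseteq Y\subseteq A\}$, $\mathrm{cl}(X)=\{y:d(X\cup\{y\})=d(X)\}$, and $PG(A;R)$ is the pregeometry $(A,\mathrm{cl})$ with dimension function $d$. (Under the hypotheses, $(C;R)\in\mathcal C$.) The restriction of a pregeometry $(C,\mathrm{cl}')$ to $B\subseteq C$ has closure $X\mapsto\mathrm{cl}'(X)\cap B$. *)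

From HB Require Import structures.
From mathcomp Require Import all_boot all_order all_algebra.
Set Implicit Arguments. Unset Strict Implicit. Unset Printing Implicit Defensive.
Import Order.TTheory GRing.Theory Num.Theory.

Section SetSystems.
Variable T : finType.

(* R[X] = { r in R : r subset of X } ;  also used for R|B = R[B] *)
Definition Rsub (R : {set {set T}}) (X : {set T}) : {set {set T}} :=
  [set r in R | r \subset X].

Definition delta (R : {set {set T}}) (X : {set T}) : int :=
  (#|X|%:Z - #|Rsub R X|%:Z)%R.

Definition set_system (A : {set T}) (R : {set {set T}}) : Prop :=
  forall r, r \in R -> r \subset A /\ r != set0.

Definition inC (A : {set T}) (R : {set {set T}}) : Prop :=
  set_system A R /\ forall X : {set T}, X \subset A -> (0 <= delta R X)%R.

Definition selfsuff (A : {set T}) (R : {set {set T}}) (X : {set T}) : Prop :=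
  forall X' : {set T}, X \subset X' -> X' \subset A -> (delta R X <= delta R X')%R.

Definition dss (A : {set T}) (R : {set {set T}}) (X : {set T}) : int :=
  \big[Order.min/delta R A]_(Y in powerset A | X \subset Y) delta R Y.

Definition clss (A : {set T}) (R : {set {set T}}) (X : {set T}) : {set T} :=
  [set y in A | dss A R (X :|: [set y]) == dss A R X].

Definition pregeometry (C : {set T}) (cl : {set T} -> {set T}) : Prop :=
  [/\ (forall X : {set T}, X \subset C -> X \subset cl X /\ cl X \subset C),
      (forall X Y : {set T}, X \subset Y -> Y \subset C -> cl X \subset cl Y),
      (forall X : {set T}, X \subset C -> cl (cl X) = cl X) &
      (forall (X : {set T}) (a b : T), X \subset C -> a \in C -> b \in C ->
          a \in cl (X :|: [set b]) -> a \notin cl X -> b \in cl (X :|: [set a]))].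

Definition pgdim (cl : {set T} -> {set T}) (X : {set T}) : nat :=
  \big[minn/#|X|]_(Y in powerset X | X \subset cl Y) #|Y|.

Definition restricts_to (cl : {set T} -> {set T}) (B : {set T})
    (cl0 : {set T} -> {set T}) : Prop :=
  forall X : {set T}, X \subset B -> cl X :&: B = cl0 X.

End SetSystems.

From HB Require Import structures.
From mathcomp Require Import all_boot all_order all_algebra zify lra.
Import Order.TTheory GRing.Theory Num.Theory.
Set Implicit Arguments. Unset Strict Implicit. Unset Printing Implicit Defensive.

(* The dimension function [dss A R] is submodular, being a minimum of the
   submodular [delta R] over supersets, and [delta] is modular across the
   amalgam: delta(Y) = delta_1(Y∩B1) + delta_2(Y∩B2) - delta_0(Y∩A0).
   Gluing minimising supersets of the traces of [Y] gives d_C(X) <= eta(Y);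
   conversely, by submodularity each trace of a minimiser [Y] of d_C(X)
   minimises [delta] in its own component, so eta(Y) = delta(Y) = d_C(X).
   For the bound on another pregeometry, a spanning set of Y∩A0 is extended
   to spanning sets S1, S2 of Y∩B1, Y∩B2; as A0 is self-sufficient, d_1, d_2
   and d_0 agree on subsets of A0, so |S1 ∪ S2| <= eta(Y), and S1 ∪ S2 spans
   Y in any pregeometry restricting to PG(B1;R1) and PG(B2;R2). *)

Section SetSystemDimension.
Variable T : finType.
Implicit Types (A B X Y Z W S V : {set T}) (R : {set {set T}}).
Local Open Scope ring_scope.

Lemma dss_le_delta A R X Y : X \subset Y -> Y \subset A -> dss A R X <= delta R Y.
Proof. by move=> XY YA; apply: bigmin_le_cond; rewrite powersetE YA XY. Qed.

Lemma dss_witness A R X : X \subset A ->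
  exists Y, [/\ X \subset Y, Y \subset A & dss A R X = delta R Y].
Proof.
move=> XA; pose P Y := (Y \in powerset A) && (X \subset Y).
have PA : P A by rewrite /P powersetE subxx XA.
case: (arg_minP (delta R) PA) => Y; rewrite /P powersetE => /andP[YA XY] minY.
exists Y; split=> //; apply/eqP; rewrite eq_le dss_le_delta //=.
by apply/bigmin_geP; split=> [|Z /minY //]; exact: minY.
Qed.

Lemma dss_ge0 A R X : inC A R -> X \subset A -> 0 <= dss A R X.
Proof. by move=> [_ delta_ge0] /(dss_witness R)[Y [_ YA ->]]; exact: delta_ge0. Qed.

Lemma delta_submod R X Y :
  delta R (X :|: Y) + delta R (X :&: Y) <= delta R X + delta R Y.
Proof.
have RU : Rsub R X :|: Rsub R Y \subset Rsub R (X :|: Y).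
  by apply/subsetP => r; rewrite !inE => /orP[]/andP[-> rS];
    rewrite (subset_trans rS) ?subsetUl ?subsetUr.
have RI : Rsub R X :&: Rsub R Y \subset Rsub R (X :&: Y).
  by apply/subsetP => r; rewrite !inE subsetI => /andP[/andP[-> ->] /andP[_ ->]].
have := cardsUI X Y; have := cardsUI (Rsub R X) (Rsub R Y).
have := subset_leq_card RU; have := subset_leq_card RI; rewrite /delta; lia.
Qed.

Lemma dss_mono A R X Y : X \subset Y -> Y \subset A -> dss A R X <= dss A R Y.
Proof.
move=> XY YA; have [W [YW WA ->]] := dss_witness R YA.
exact: dss_le_delta (subset_trans XY YW) WA.
Qed.

Lemma dss_submod A R X Y : X \subset A -> Y \subset A ->
  dss A R (X :|: Y) + dss A R (X :&: Y) <= dss A R X + dss A R Y.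
Proof.
move=> /(dss_witness R)[W [XW WA ->]] /(dss_witness R)[W' [YW' W'A ->]].
apply: le_trans (delta_submod R W W'); apply: lerD.
  by apply: dss_le_delta; [exact: setUSS | rewrite subUset WA W'A].
exact: dss_le_delta (setISS XW YW') (subset_trans (subsetIl _ _) WA).
Qed.

Lemma dss_setU_eq A R S Z V : S \subset Z -> V :|: Z \subset A ->
  dss A R S = dss A R Z -> dss A R (V :|: S) = dss A R (V :|: Z).
Proof.
move=> SZ VZA dSZ; have ZA := subset_trans (subsetUr V Z) VZA.
apply: le_anti; rewrite dss_mono ?setUS //=.
have SVA : V :|: S \subset A.
  by rewrite subUset (subset_trans (subsetUl V Z)) ?(subset_trans SZ).
have := dss_submod R SVA ZA.
have -> : (V :|: S) :|: Z = V :|: Z by rewrite -setUA (setUidPr SZ).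
have : dss A R S <= dss A R ((V :|: S) :&: Z).
  by apply: dss_mono; rewrite ?subsetI ?subsetUr ?SZ // (subset_trans (subsetIr _ _)).
lia.
Qed.

(* A spanning subset of [Z] grown from [S0]: each element added raises the
   dimension, so at most [dss Z - dss S0] elements are needed. *)
Lemma dss_spanning_extension A R S0 Z : S0 \subset Z -> Z \subset A ->
  exists S, [/\ S0 \subset S, S \subset Z, dss A R S = dss A R Z &
             #|S|%:Z - #|S0|%:Z <= dss A R Z - dss A R S0].
Proof.
have [n] := ubnP #|Z|; elim: n Z => // n IH Z ltZn S0Z ZA.
have [ZS0|/subsetPn[z zZ zS0]] := boolP (Z \subset S0).
  have -> : Z = S0 by apply/eqP; rewrite eqEsubset ZS0 S0Z.
  by exists S0; split=> //; lia.
have Z'Z : Z :\ z \subset Z := subD1set Z z.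
have S0Z' : S0 \subset Z :\ z by rewrite subsetD1 S0Z zS0.
have ltZ'n : (#|Z :\ z| < n)%N by move: ltZn; rewrite (cardsD1 z Z) zZ.
have [S' [S0S' S'Z' dS' cardS']] := IH _ ltZ'n S0Z' (subset_trans Z'Z ZA).
have S'Z := subset_trans S'Z' Z'Z.
have [dZ|dZ'] := leP (dss A R Z) (dss A R (Z :\ z)).
  have dZZ' : dss A R (Z :\ z) = dss A R Z by apply: le_anti; rewrite dZ dss_mono.
  by exists S'; split; rewrite // -?dZZ'.
exists (z |: S'); split.
- exact: subset_trans S0S' (subsetU1 _ _).
- by rewrite subUset sub1set zZ.
- by rewrite (dss_setU_eq S'Z') ?setD1K // subUset sub1set zZ.
- have : (#|z |: S'| <= #|S'|.+1)%N by rewrite cardsU1; case: (z \notin S').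
  by move: cardS' dZ'; lia.
Qed.

Lemma sub_clss A R S Z : S \subset Z -> Z \subset A -> dss A R S = dss A R Z ->
  Z \subset clss A R S.
Proof.
move=> SZ ZA dSZ; apply/subsetP => z zZ; rewrite inE (subsetP ZA z zZ) /=.
have SzZ : S :|: [set z] \subset Z by rewrite subUset SZ sub1set zZ.
apply/eqP/le_anti; rewrite (dss_mono R (subsetUl S [set z])) ?(subset_trans SzZ) //.
by rewrite dSZ dss_mono.
Qed.

Lemma delta_setI_minimizer A R X Y W : X \subset Y -> Y \subset A ->
  dss A R X = delta R Y -> W \subset A -> delta R (Y :&: W) <= delta R W.
Proof.
move=> XY YA dY WA.
have : delta R Y <= delta R (Y :|: W).
  by rewrite -dY dss_le_delta // ?subUset ?YA // (subset_trans XY (subsetUl _ _)).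
have := delta_submod R Y W; lia.
Qed.

Lemma dss_minimizer_trace A R Z R' X Y : Z \subset A ->
  (forall W, W \subset Z -> delta R W = delta R' W) ->
  X \subset Y -> Y \subset A -> dss A R X = delta R Y ->
  dss Z R' (Y :&: Z) = delta R' (Y :&: Z).
Proof.
move=> ZA eqR XY YA dY; apply/le_anti; rewrite dss_le_delta ?subsetIr //=.
have [W [YZW WZ ->]] := dss_witness R' (subsetIr Y Z).
have YW : Y :&: W = Y :&: Z.
  by apply/eqP; rewrite eqEsubset setIS //= subsetI subsetIl YZW.
rewrite -!eqR ?subsetIr // -YW.
exact: delta_setI_minimizer XY YA dY (subset_trans WZ ZA).
Qed.

Lemma delta_Rsub R A W : W \subset A -> delta (Rsub R A) W = delta R W.
Proof.
move=> WA; rewrite /delta; have -> // : Rsub (Rsub R A) W = Rsub R W.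
apply/setP => r; rewrite !inE -andbA.
by apply: andb_id2l => _; apply: andb_idl => /subset_trans->.
Qed.

Lemma dss_selfsuff_restrict B R A0 Z : A0 \subset B -> selfsuff B R A0 ->
  Z \subset A0 -> dss B R Z = dss A0 (Rsub R A0) Z.
Proof.
move=> A0B ssA0 ZA0; apply: le_anti; apply/andP; split.
  have [W [ZW WA0 ->]] := dss_witness (Rsub R A0) ZA0.
  by rewrite delta_Rsub // dss_le_delta // (subset_trans WA0).
have [W [ZW WB ->]] := dss_witness R (subset_trans ZA0 A0B).
have : dss A0 (Rsub R A0) Z <= delta R (W :&: A0).
  by rewrite -(delta_Rsub _ (subsetIr W A0)) dss_le_delta ?subsetIr // subsetI ZW.
have : delta R A0 <= delta R (W :|: A0) by rewrite ssA0 ?subsetUr // subUset WB.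
have := delta_submod R W A0; lia.
Qed.

End SetSystemDimension.

Section Pregeometry.
Variable T : finType.
Implicit Types (B C X S Z : {set T}) (R : {set {set T}}) (cl : {set T} -> {set T}).

Lemma pgdim_le_card cl X S : S \subset X -> X \subset cl S -> (pgdim cl X <= #|S|)%N.
Proof.
move=> SX XS; rewrite /pgdim -minEnat -leEnat.
by apply: bigmin_le_cond; rewrite powersetE SX.
Qed.

Lemma pregeometry_exchange C cl X S s : pregeometry C cl ->
  X \subset C -> S \subset C -> X \subset cl S -> s \in S ->
  X \subset cl (S :\ s) \/ exists2 x, x \in X & X \subset cl (x |: (S :\ s)).
Proof.
move=> [ext mono idem exch] XC SC XS sS.
have [|/subsetPn[x xX xS']] := boolP (X \subset cl (S :\ s)); first by left.
right; exists x => //.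
have S'C : S :\ s \subset C := subset_trans (subD1set S s) SC.
have xC := subsetP XC x xX.
have S'xC : x |: (S :\ s) \subset C by rewrite subUset sub1set xC.
have sSx : s \in cl ((S :\ s) :|: [set x]).
  apply: exch => //; first exact: subsetP SC s sS.
  by rewrite setUC setD1K //; exact: subsetP XS x xX.
have SSx : S \subset cl (x |: (S :\ s)).
  apply/subsetP => y yS; have [->|ys] := eqVneq y s; first by rewrite setUC.
  by apply: (subsetP (proj1 (ext _ S'xC))); rewrite !inE ys yS orbT.
apply: subset_trans XS _; rewrite -(idem _ S'xC); apply: mono => //.
exact: (proj2 (ext _ S'xC)).
Qed.

Lemma pgdim_le_spanning C cl X S : pregeometry C cl ->
  X \subset C -> S \subset C -> X \subset cl S -> (pgdim cl X <= #|S|)%N.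
Proof.
move=> pg XC; have [n] := ubnP #|S :\: X|; elim: n S => // n IH S ltSn SC XS.
have [SX|/subsetPn[s sS sX]] := boolP (S \subset X); first exact: pgdim_le_card.
have S'C : S :\ s \subset C := subset_trans (subD1set S s) SC.
have smaller S' : S' :\: X \subset (S :\: X) :\ s -> (#|S' :\: X| < n)%N.
  move=> S'X; rewrite ltnS in ltSn; apply: leq_trans ltSn.
  apply: leq_ltn_trans (subset_leq_card S'X) _.
  by apply: proper_card; apply: properD1; rewrite inE sX.
have [XS'|[x xX XSx]] := pregeometry_exchange pg XC SC XS sS.
  apply: leq_trans (subset_leq_card (subD1set S s)).
  apply: IH XS' => //; apply: smaller.
  by apply/subsetP => y; rewrite !inE => /and3P[-> -> ->].
have SxC : x |: (S :\ s) \subset C by rewrite subUset sub1set (subsetP XC).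
have cardSx : (#|x |: (S :\ s)| <= #|S|)%N.
  by rewrite cardsU1 [leqRHS](cardsD1 s) sS; case: (x \notin _).
apply: leq_trans cardSx; apply: IH XSx => //; apply: smaller.
apply/subsetP => y; rewrite !inE => /andP[yX /orP[/eqP yx|/andP[-> ->]]].
  by rewrite yx xX in yX.
by rewrite yX.
Qed.

Lemma sub_cl_restricts cl B R S Z : restricts_to cl B (clss B R) ->
  S \subset Z -> Z \subset B -> dss B R S = dss B R Z -> Z \subset cl S.
Proof.
move=> clB SZ ZB dSZ; apply: subset_trans (sub_clss SZ ZB dSZ) _.
by rewrite -clB ?(subset_trans SZ ZB) ?subsetIl.
Qed.

End Pregeometry.

Section Amalgam.
Variable T : finType.
Variables (B1 B2 : {set T}) (R1 R2 : {set {set T}}).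
Hypotheses (sysB1 : inC B1 R1) (sysB2 : inC B2 R2)
  (R1R2 : Rsub R1 (B1 :&: B2) = Rsub R2 (B1 :&: B2))
  (A0B1 : selfsuff B1 R1 (B1 :&: B2)) (A0B2 : selfsuff B2 R2 (B1 :&: B2)).
Implicit Types (X Y Z W : {set T}).
Local Open Scope ring_scope.

Local Notation A0 := (B1 :&: B2).
Local Notation C := (B1 :|: B2).
Local Notation R := (R1 :|: R2).
Local Notation R0 := (Rsub R1 A0).

Lemma traces_cover Y : Y \subset C -> (Y :&: B1) :|: (Y :&: B2) = Y.
Proof. by move=> YC; rewrite -setIUr; apply/setIidPl. Qed.

Lemma traces_meet Y : (Y :&: B1) :&: (Y :&: B2) = Y :&: A0.
Proof. by rewrite setIACA setIid. Qed.

Lemma delta_amalgam Y : Y \subset C ->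
  delta R Y = delta R1 (Y :&: B1) + delta R2 (Y :&: B2) - delta R0 (Y :&: A0).
Proof.
move=> YC.
have RY : Rsub R Y = Rsub R1 (Y :&: B1) :|: Rsub R2 (Y :&: B2).
  apply/setP => r; rewrite !inE !subsetI.
  case rR1: (r \in R1).
    by rewrite (proj1 (sysB1.1 r rR1)) andbT /=; case: (r \subset Y); rewrite ?andbF.
  by case rR2: (r \in R2); rewrite // (proj1 (sysB2.1 r rR2)) andbT.
have RY0 : Rsub R1 (Y :&: B1) :&: Rsub R2 (Y :&: B2) = Rsub R0 (Y :&: A0).
  apply/setP => r; have := congr1 (fun Q : {set {set T}} => r \in Q) R1R2.
  rewrite /= !inE !subsetI.
  by case: (r \in R1); case: (r \in R2); case: (r \subset Y);
    case: (r \subset B1); case: (r \subset B2).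
have := cardsUI (Y :&: B1) (Y :&: B2); rewrite traces_cover // traces_meet.
have := cardsUI (Rsub R1 (Y :&: B1)) (Rsub R2 (Y :&: B2)); rewrite -RY RY0.
rewrite /delta; lia.
Qed.

Lemma delta_R0_R1 W : W \subset A0 -> delta R0 W = delta R1 W.
Proof. exact: delta_Rsub. Qed.

Lemma delta_R0_R2 W : W \subset A0 -> delta R0 W = delta R2 W.
Proof. by rewrite R1R2; exact: delta_Rsub. Qed.

Lemma delta_amalgam_B1 W : W \subset B1 -> delta R W = delta R1 W.
Proof.
move=> WB1; rewrite delta_amalgam ?(subset_trans WB1) ?subsetUl //.
have W2 : W :&: B2 = W :&: A0 by rewrite setIA (setIidPl WB1).
by rewrite (setIidPl WB1) W2 delta_R0_R2 ?subsetIr // addrK.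
Qed.

Lemma delta_amalgam_B2 W : W \subset B2 -> delta R W = delta R2 W.
Proof.
move=> WB2; rewrite delta_amalgam ?(subset_trans WB2) ?subsetUr //.
have W1 : W :&: B1 = W :&: A0 by rewrite [B1 :&: B2]setIC setIA (setIidPl WB2).
by rewrite (setIidPl WB2) W1 delta_R0_R1 ?subsetIr // addrAC subrr add0r.
Qed.

Lemma delta_amalgam_A0 W : W \subset A0 -> delta R W = delta R0 W.
Proof.
move=> WA0; rewrite delta_R0_R1 // delta_amalgam_B1 //.
exact: subset_trans WA0 (subsetIl _ _).
Qed.

Definition eta X :=
  dss B1 R1 (X :&: B1) + dss B2 R2 (X :&: B2) - dss A0 R0 (X :&: A0).

Definition zeta X := \big[Order.min/eta C]_(Y in powerset C | X \subset Y) eta Y.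

Lemma zeta_le_eta X Y : X \subset Y -> Y \subset C -> zeta X <= eta Y.
Proof. by move=> XY YC; apply: bigmin_le_cond; rewrite powersetE YC XY. Qed.

Lemma le_zeta m X : X \subset C ->
  (forall Y, X \subset Y -> Y \subset C -> m <= eta Y) -> m <= zeta X.
Proof.
move=> XC le_m; apply/bigmin_geP; split=> [|Y]; first exact: le_m.
by rewrite powersetE => /andP[YC XY]; exact: le_m.
Qed.

Lemma dss_le_eta X Y : X \subset Y -> Y \subset C -> dss C R X <= eta Y.
Proof.
move=> XY YC; rewrite /eta.
have [W1 [YW1 W1B1 ->]] := dss_witness R1 (subsetIr Y B1).
have [W2 [YW2 W2B2 ->]] := dss_witness R2 (subsetIr Y B2).
have : dss C R X <= delta R (W1 :|: W2).
  apply: dss_le_delta; last exact: setUSS.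
  by apply: subset_trans XY _; rewrite -(traces_cover YC) setUSS.
have : dss A0 R0 (Y :&: A0) <= delta R0 (W1 :&: W2).
  by rewrite -traces_meet dss_le_delta ?setISS.
have := delta_submod R W1 W2.
rewrite (delta_amalgam_B1 W1B1) (delta_amalgam_B2 W2B2).
rewrite (delta_amalgam_A0 (setISS W1B1 W2B2)); lia.
Qed.

Lemma eta_minimizer X Y : X \subset Y -> Y \subset C ->
  dss C R X = delta R Y -> eta Y = delta R Y.
Proof.
move=> XY YC dY; rewrite /eta (delta_amalgam YC).
have A0C : A0 \subset C := subset_trans (subsetIl B1 B2) (subsetUl B1 B2).
have trace Z R' : Z \subset C -> (forall W, W \subset Z -> delta R W = delta R' W) ->
    dss Z R' (Y :&: Z) = delta R' (Y :&: Z).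
  by move=> ZC eqR; exact: dss_minimizer_trace ZC eqR XY YC dY.
rewrite (trace _ _ (subsetUl B1 B2) delta_amalgam_B1).
rewrite (trace _ _ (subsetUr B1 B2) delta_amalgam_B2).
by rewrite (trace _ _ A0C delta_amalgam_A0).
Qed.

Lemma dss_amalgam X : X \subset C -> dss C R X = zeta X.
Proof.
move=> XC; apply/le_anti/andP; split.
  by apply: le_zeta XC _ => Y; exact: dss_le_eta.
have [Y [XY YC dY]] := dss_witness R XC.
by rewrite dY -(eta_minimizer XY YC dY) zeta_le_eta.
Qed.

Lemma dss_B1_A0 Z : Z \subset A0 -> dss B1 R1 Z = dss A0 R0 Z.
Proof. exact: dss_selfsuff_restrict (subsetIl B1 B2) A0B1. Qed.

Lemma dss_B2_A0 Z : Z \subset A0 -> dss B2 R2 Z = dss A0 R0 Z.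
Proof. by rewrite R1R2; exact: dss_selfsuff_restrict (subsetIr B1 B2) A0B2. Qed.

Lemma pgdim_le_eta cl X Y : pregeometry C cl ->
  restricts_to cl B1 (clss B1 R1) -> restricts_to cl B2 (clss B2 R2) ->
  X \subset Y -> Y \subset C -> (pgdim cl X)%:Z <= eta Y.
Proof.
move=> pg clB1 clB2 XY YC; rewrite /eta.
set Y0 := Y :&: A0; set Y1 := Y :&: B1; set Y2 := Y :&: B2.
have Y0A0 : Y0 \subset A0 := subsetIr Y A0.
have Y0Y1 : Y0 \subset Y1 := setIS Y (subsetIl B1 B2).
have Y0Y2 : Y0 \subset Y2 := setIS Y (subsetIr B1 B2).
have Y1B1 : Y1 \subset B1 := subsetIr Y B1.
have Y2B2 : Y2 \subset B2 := subsetIr Y B2.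
have [S0 [_ S0Y0 dS0 cardS0]] :=
  dss_spanning_extension R1 (sub0set Y0) (subset_trans Y0Y1 Y1B1).
have [S1 [S0S1 S1Y1 dS1 cardS1]] :=
  dss_spanning_extension R1 (subset_trans S0Y0 Y0Y1) Y1B1.
have [S2 [S0S2 S2Y2 dS2 cardS2]] :=
  dss_spanning_extension R2 (subset_trans S0Y0 Y0Y2) Y2B2.
have S12C : S1 :|: S2 \subset C.
  by rewrite setUSS ?(subset_trans S1Y1) ?(subset_trans S2Y2).
have span : X \subset cl (S1 :|: S2).
  have [_ mono _ _] := pg.
  apply: subset_trans XY _; rewrite -(traces_cover YC) subUset.
  rewrite (subset_trans (sub_cl_restricts clB1 S1Y1 Y1B1 dS1)) ?mono ?subsetUl //=.
  by rewrite (subset_trans (sub_cl_restricts clB2 S2Y2 Y2B2 dS2)) ?mono ?subsetUr.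
have cardS12 : (#|S1 :|: S2| + #|S0| <= #|S1| + #|S2|)%N.
  by rewrite -(cardsUI S1 S2) leq_add2l subset_leq_card // subsetI S0S1 S0S2.
have dY0 : dss B1 R1 Y0 = dss A0 R0 Y0 := dss_B1_A0 Y0A0.
have card0 : #|S0|%:Z <= dss A0 R0 Y0.
  by move: cardS0 (dss_ge0 sysB1 (sub0set B1)); rewrite dY0 cards0; lra.
have S0A0 := subset_trans S0Y0 Y0A0.
have card1 : #|S1|%:Z - #|S0|%:Z <= dss B1 R1 Y1 - dss A0 R0 Y0.
  by rewrite -dY0 -dS0.
have card2 : #|S2|%:Z - #|S0|%:Z <= dss B2 R2 Y2 - dss A0 R0 Y0.
  by rewrite -dss_B1_A0 // -dS0 dss_B1_A0 // -dss_B2_A0.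
have dim : (pgdim cl X)%:Z + #|S0|%:Z <= #|S1|%:Z + #|S2|%:Z.
  rewrite -!PoszD lez_nat; apply: leq_trans cardS12; rewrite leq_add2r.
  exact: pgdim_le_spanning pg (subset_trans XY YC) S12C span.
lra.
Qed.

Lemma pgdim_le_zeta cl X : pregeometry C cl ->
  restricts_to cl B1 (clss B1 R1) -> restricts_to cl B2 (clss B2 R2) ->
  X \subset C -> (pgdim cl X)%:Z <= zeta X.
Proof. by move=> pg clB1 clB2 XC; apply: le_zeta XC _ => Y; exact: pgdim_le_eta. Qed.

End Amalgam.

Theorem lemma6p7 (T : finType) (B1 B2 : {set T}) (R1 R2 : {set {set T}}) :
  inC B1 R1 -> inC B2 R2 ->
  Rsub R1 (B1 :&: B2) = Rsub R2 (B1 :&: B2) ->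
  selfsuff B1 R1 (B1 :&: B2) -> selfsuff B2 R2 (B1 :&: B2) ->
  let A0 := B1 :&: B2 in
  let C := B1 :|: B2 in
  let R := R1 :|: R2 in
  let eta := fun X : {set T} =>
    (dss B1 R1 (X :&: B1) + dss B2 R2 (X :&: B2)
       - dss A0 (Rsub R1 A0) (X :&: A0))%R in
  let zeta := fun X : {set T} =>
    \big[Order.min/eta C]_(Y in powerset C | X \subset Y) eta Y in
  (forall X : {set T}, X \subset C -> dss C R X = zeta X) /\
  (forall cl' : {set T} -> {set T},
     pregeometry C cl' ->
     restricts_to cl' B1 (clss B1 R1) ->
     restricts_to cl' B2 (clss B2 R2) ->
     forall X : {set T}, X \subset C -> ((pgdim cl' X)%:Z <= zeta X)%R).
Proof.
move=> sysB1 sysB2 R1R2 A0B1 A0B2 A0 C R eta zeta; split.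
- exact: dss_amalgam sysB1 sysB2 R1R2.
- by move=> cl pg clB1 clB2 X; exact: pgdim_le_zeta.
Qed.
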